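(* The distributive law $\lambda$ of the free monad $\mathcal T_\Sigma$ over the cofree copointed functor $\langle\mathrm{Id}\times F,\pi_1\rangle$, induced by the abstract GSOS specification $\rho$ below, preserves the axioms of idempotent semirings. Consequently there is a distributive law $\kappa$ of the monad $\mathcal P_\omega((-)^* )$ over $\langle\mathrm{Id}\times F,\pi_1\rangle$ such that $i\circ q\colon\lambda\Rightarrow\kappa$ is a morphism of distributive laws. Here: - $q\colon T_\Sigma\Rightarrow T'$ is the quotient map to the free idempotent semiring monad; - $i\colon T'\Rightarrow\mathcal P_\omega((-)^* )$ is the monad isomorphism.
   Context: Work in $\mathrm{Set}$. Let $A$ be a set and $FX=2\times X^A$, where $2=\{0,1\}$. The signature functor is $\Sigma X=1+1+X\times X+X\times X$, with constants $\mathbf 0,\mathbf 1$ and binary operations $+,\cdot$. $\mathcal T_\Sigma$ is the free monad over $\Sigma$ ($T_\Sigma X$ = terms over $X$). The idempotent semiring axioms are: - $(x+y)+z=x+(y+z)$, $x+y=y+x$, $x+\mathbf 0=x$, $x+x=x$; - $(xy)z=x(yz)$, $\mathbf 1x=x=x\mathbf 1$; - $x(y+z)=xy+xz$, $(x+y)z=xz+yz$; - $\mathbf 0x=\mathbf 0=x\mathbf 0$. The monad $\mathcal P_\omega((-)^* )$ is defined by: - it sends $X$ to the set of finite sets of finite words over $X$; - $\mathcal P_\omega(f^* )(L)=\{f(x_1)\cdots f(x_n)\mid x_1\cdots x_n\in L\}$; - unit $x\mapsto\{x\}$; - multiplication $\mathcal L\mapsto\bigcup_{L_1\cdots L_n\in\mathcal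 L}\{w_1\cdots w_n\mid w_i\in L_i\}$. This monad is isomorphic to the quotient of $\mathcal T_\Sigma$ by the idempotent semiring axioms. A copointed functor is $\langle H,\epsilon\rangle$ with $\epsilon\colon H\Rightarrow\mathrm{Id}$. A distributive law over it is a distributive law $\lambda$ of the monad over $H$ satisfying $\epsilon_T\circ\lambda=T\epsilon$. Abstract GSOS specifications $\rho\colon\Sigma(\mathrm{Id}\times F)\Rightarrow FT_\Sigma$ correspond bijectively to distributive laws of $\mathcal T_\Sigma$ over $\langle\mathrm{Id}\times F,\pi_1\rangle$. Here $\rho$ is given by: - $\rho(\mathbf 0)=\langle 0,a\mapsto\mathbf 0\rangle$ and $\rho(\mathbf 1)=\langle 1,a\mapsto\mathbf 0\rangle$, where the empty sum is the term $\mathbf 0$; - $\rho(\langle x,o,f\rangle+\langle y,p,g\rangle)=\langle\max\{o,p\},a\mapsto f(a)+g(a)\rangle$; - $\rho(\langle x,o,f\rangle\cdot\langle y,p,g\rangle)=\langle\min\{o,p\},a\mapsto f(a)\cdot y\rangle$ if $o=0$; - $\rho(\langle x,o,f\rangle\cdot\langle y,p,g\rangle)=\langle\min\{o,p\},a\mapsto f(a)\cdot y+g(a)\rangle$ if $o=1$. $\lambda$ preserves an axiom $t_1=t_2$ if, for every set $X$ and every instantiation of its variables by elements of $X\times FX$, $\lambda_X(t_1)$ and $\lambda_X(t_2)$ are related by the lifting $\mathrm{Rel}(\mathrm{Id}\times F)$ of the congruence $\ker(q_X)$ on $T_\Sigma X$. This means their term components and their derivatives $a\mapsto(\cdot)$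 at every $a$ are identified modulo the idempotent semiring axioms, and their output bits are equal. A morphism of distributive laws $\tau\colon\lambda\Rightarrow\kappa$ is a monad morphism $\tau$ with $\kappa\circ\tau_H=H\tau\circ\lambda$. *)

From Stdlib Require Import List.
Import ListNotations.
Set Implicit Arguments.

Definition F (A X : Type) : Type := (bool * (A -> X))%type.
Definition Fmap (A X Y : Type) (f : X -> Y) (p : F A X) : F A Y :=
  (fst p, fun a => f (snd p a)).
Definition H (A X : Type) : Type := (X * F A X)%type.
Definition Hmap (A X Y : Type) (f : X -> Y) (p : H A X) : H A Y :=
  (f (fst p), Fmap f (snd p)).

Inductive Sig (X : Type) : Type :=
| SZero : Sig X
| SOne : Sig X
| SPlus : X -> X -> Sig X
| STimes : X -> X -> Sig X.
Arguments SZero {X}. Arguments SOne {X}.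

Inductive term (X : Type) : Type :=
| Var : X -> term X
| Zero : term X
| One : term X
| Plus : term X -> term X -> term X
| Times : term X -> term X -> term X.
Arguments Zero {X}. Arguments One {X}.

Fixpoint tbind (X Y : Type) (s : X -> term Y) (t : term X) : term Y :=
  match t with
  | Var x => s x
  | Zero => Zero
  | One => One
  | Plus t u => Plus (tbind s t) (tbind s u)
  | Times t u => Times (tbind s t) (tbind s u)
  end.
Definition tmap (X Y : Type) (f : X -> Y) (t : term X) : term Y :=
  tbind (fun x => Var (f x)) t.
Definition tjoin (X : Type) (t : term (term X)) : term X := tbind (fun u => u) t.

Definition rho (A Y : Type) (s : Sig (H A Y)) : F A (term Y) :=
  match s with
  | SZero => (false, fun _ => Zero)
  | SOne => (true, fun _ => Zero)
  | SPlus (_, (o, f)) (_, (p, g)) =>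
      (orb o p, fun a => Plus (Var (f a)) (Var (g a)))
  | STimes (_, (o, f)) (y, (p, g)) =>
      (andb o p,
       fun a => if o then Plus (Times (Var (f a)) (Var y)) (Var (g a))
                else Times (Var (f a)) (Var y))
  end.

(* ---------- The distributive law lambda : T_Sigma (Id x F) => (Id x F) T_Sigma
   induced by rho (standard inductive construction:
     lambda (eta h)        = H eta h,
     lambda (sigma(t_i))   = < sigma (pi1 lambda t_i) , F mu (rho_T (lambda t_i)) > ). *)
Fixpoint lam (A X : Type) (t : term (H A X)) : H A (term X) :=
  match t with
  | Var h => (Var (fst h), Fmap (@Var X) (snd h))
  | Zero => (Zero, Fmap (@tjoin X) (rho (A := A) (Y := term X) SZero))
  | One => (One, Fmap (@tjoin X) (rho (A := A) (Y := term X) SOne))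
  | Plus t u =>
      let l1 := lam t in let l2 := lam u in
      (Plus (fst l1) (fst l2), Fmap (@tjoin X) (rho (SPlus l1 l2)))
  | Times t u =>
      let l1 := lam t in let l2 := lam u in
      (Times (fst l1) (fst l2), Fmap (@tjoin X) (rho (STimes l1 l2)))
  end.

Inductive isr_axiom : term nat -> term nat -> Prop :=
| ax_plus_assoc : isr_axiom (Plus (Plus (Var 0) (Var 1)) (Var 2))
                            (Plus (Var 0) (Plus (Var 1) (Var 2)))
| ax_plus_comm : isr_axiom (Plus (Var 0) (Var 1)) (Plus (Var 1) (Var 0))
| ax_plus_zero : isr_axiom (Plus (Var 0) Zero) (Var 0)
| ax_plus_idem : isr_axiom (Plus (Var 0) (Var 0)) (Var 0)
| ax_times_assoc : isr_axiom (Times (Times (Var 0) (Var 1)) (Var 2))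
                             (Times (Var 0) (Times (Var 1) (Var 2)))
| ax_one_l : isr_axiom (Times One (Var 0)) (Var 0)
| ax_one_r : isr_axiom (Times (Var 0) One) (Var 0)
| ax_distr_l : isr_axiom (Times (Var 0) (Plus (Var 1) (Var 2)))
                         (Plus (Times (Var 0) (Var 1)) (Times (Var 0) (Var 2)))
| ax_distr_r : isr_axiom (Times (Plus (Var 0) (Var 1)) (Var 2))
                         (Plus (Times (Var 0) (Var 2)) (Times (Var 1) (Var 2)))
| ax_zero_l : isr_axiom (Times Zero (Var 0)) Zero
| ax_zero_r : isr_axiom (Times (Var 0) Zero) Zero.

(* ker(q_X): the least congruence on T_Sigma X containing all instances of the axioms *)
Inductive isr_eq (X : Type) : term X -> term X -> Prop :=
| isr_refl : forall t, isr_eq t t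
| isr_sym : forall t u, isr_eq t u -> isr_eq u t
| isr_trans : forall t u v, isr_eq t u -> isr_eq u v -> isr_eq t v
| isr_plus : forall t t' u u', isr_eq t t' -> isr_eq u u' -> isr_eq (Plus t u) (Plus t' u')
| isr_times : forall t t' u u', isr_eq t t' -> isr_eq u u' -> isr_eq (Times t u) (Times t' u')
| isr_ax : forall l r, isr_axiom l r -> forall s : nat -> term X,
    isr_eq (tbind s l) (tbind s r).

Definition relH (A X : Type) (R : X -> X -> Prop) (p q : H A X) : Prop :=
  R (fst p) (fst q) /\ fst (snd p) = fst (snd q) /\
  forall a, R (snd (snd p) a) (snd (snd q) a).

Definition preserves_axiom (A : Type) (l r : term nat) : Prop :=
  forall (X : Type) (v : nat -> H A X),
    relH (@isr_eq X) (lam (tmap v l)) (lam (tmap v r)).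

Definition lang (X : Type) := list X -> Prop.
Definition finite_lang (X : Type) (L : lang X) : Prop :=
  exists s : list (list X), forall w, L w <-> In w s.
Definition PW (X : Type) : Type := { L : lang X | finite_lang L }.

Lemma PWmap_fin (X Y : Type) (f : X -> Y) (L : PW X) :
  finite_lang (fun w' => exists w, proj1_sig L w /\ w' = map f w).
Proof.
  destruct L as [L [s Hs]]; simpl.
  exists (map (map f) s); intro w'; rewrite in_map_iff; split.
  - intros [w [Hw ->]]; exists w; split; [reflexivity | apply Hs; exact Hw].
  - intros [w [<- Hw]]; exists w; split; [apply Hs; exact Hw | reflexivity].
Qed.
Definition PWmap (X Y : Type) (f : X -> Y) (L : PW X) : PW Y :=
  exist _ _ (PWmap_fin f L).

Lemma PWunit_fin (X : Type) (x : X) : finite_lang (fun w => w = [x]).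
Proof.
  exists [[x]]; intro w; simpl; split.
  - intros ->; left; reflexivity.
  - intros [<- | []]; reflexivity.
Qed.
Definition PWunit (X : Type) (x : X) : PW X := exist _ _ (PWunit_fin x).

Fixpoint concat_in (X : Type) (Ls : list (PW X)) (w : list X) : Prop :=
  match Ls with
  | [] => w = []
  | L :: Ls' => exists w1 w2, proj1_sig L w1 /\ concat_in Ls' w2 /\ w = w1 ++ w2
  end.

Lemma concat_in_fin (X : Type) (Ls : list (PW X)) : finite_lang (concat_in Ls).
Proof.
  induction Ls as [|[L [sL HL]] Ls [sR HR]]; simpl.
  - exists [[]]; intro w; simpl; split.
    + intros ->; left; reflexivity.
    + intros [<- | []]; reflexivity.
  - exists (flat_map (fun w1 => map (app w1) sR) sL); intro w.
    rewrite in_flat_map; split.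
    + intros [w1 [w2 [H1 [H2 ->]]]]; exists w1; split; [apply HL; exact H1|].
      apply in_map_iff; exists w2; split; [reflexivity | apply HR; exact H2].
    + intros [w1 [H1 H2]]; apply in_map_iff in H2; destruct H2 as [w2 [<- H2]].
      exists w1, w2; split; [apply HL; exact H1|]; split; [apply HR; exact H2|reflexivity].
Qed.

Lemma union_concat_fin (X : Type) (s : list (list (PW X))) :
  finite_lang (fun w => exists Ls, In Ls s /\ concat_in Ls w).
Proof.
  induction s as [|Ls s [s' Hs']].
  - exists []; intro w; simpl; split; [intros [_ [[] _]] | intros []].
  - destruct (concat_in_fin Ls) as [s0 H0].
    exists (s0 ++ s'); intro w; rewrite in_app_iff; split.
    + intros [Ls' [[<- | Hin] Hc]].
      * left; apply H0; exact Hc.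
      * right; apply Hs'; exists Ls'; split; assumption.
    + intros [Hw | Hw].
      * exists Ls; split; [left; reflexivity | apply H0; exact Hw].
      * apply Hs' in Hw; destruct Hw as [Ls' [Hin Hc]].
        exists Ls'; split; [right; exact Hin | exact Hc].
Qed.

Lemma PWmu_fin (X : Type) (LL : PW (PW X)) :
  finite_lang (fun w => exists Ls, proj1_sig LL Ls /\ concat_in Ls w).
Proof.
  destruct LL as [LL [s Hs]]; simpl.
  destruct (union_concat_fin s) as [s' Hs']; exists s'; intro w.
  rewrite <- Hs'; split; intros [Ls [H1 H2]]; exists Ls; split;
    try (apply Hs; exact H1); exact H2.
Qed.
Definition PWmu (X : Type) (LL : PW (PW X)) : PW X := exist _ _ (PWmu_fin LL).

(* ---------- i o q : T_Sigma => P_omega((-)^star)  (interpretation of a term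
   as the finite language it denotes in the free idempotent semiring) ---------- *)
Fixpoint sem (X : Type) (t : term X) : list (list X) :=
  match t with
  | Var x => [[x]]
  | Zero => []
  | One => [[]]
  | Plus t u => sem t ++ sem u
  | Times t u => flat_map (fun w1 => map (app w1) (sem u)) (sem t)
  end.
Lemma sem_fin (X : Type) (t : term X) : finite_lang (fun w => In w (sem t)).
Proof. exists (sem t); intro w; reflexivity. Qed.
Definition tau (X : Type) (t : term X) : PW X := exist _ _ (sem_fin t).

Definition is_distr_law_PW (A : Type)
    (kappa : forall X : Type, PW (H A X) -> H A (PW X)) : Prop :=
  (forall (X Y : Type) (f : X -> Y) (t : PW (H A X)),
      kappa Y (PWmap (Hmap f) t) = Hmap (PWmap f) (kappa X t)) /\
  (forall (X : Type) (h : H A X), kappa X (PWunit h) = Hmap (@PWunit X) h) /\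
  (forall (X : Type) (t : PW (PW (H A X))),
      kappa X (PWmu t) = Hmap (@PWmu X) (kappa (PW X) (PWmap (kappa X) t))) /\
  (forall (X : Type) (t : PW (H A X)), fst (kappa X t) = PWmap fst t).

Definition tau_monad_morphism : Prop :=
  (forall (X Y : Type) (f : X -> Y) (t : term X),
      tau (tmap f t) = PWmap f (tau t)) /\
  (forall (X : Type) (x : X), tau (Var x) = PWunit x) /\
  (forall (X : Type) (t : term (term X)),
      tau (tjoin t) = PWmu (PWmap (@tau X) (tau t))).

Definition distr_law_morphism (A : Type)
    (kappa : forall X : Type, PW (H A X) -> H A (PW X)) : Prop :=
  forall (X : Type) (t : term (H A X)),
    kappa X (tau t) = Hmap (@tau X) (lam t).

From Stdlib Require Import List Bool Setoid Morphisms.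
From Stdlib Require Import ClassicalEpsilon FunctionalExtensionality.
From Stdlib Require Import PropExtensionality ProofIrrelevance.
Import ListNotations.

(* A term denotes a finite language ([sem]), and this semantics is sound and
   complete for idempotent semirings: two terms are provably equal iff they
   denote the same language.  Each component of [lam t] depends only on the
   language of [t]: the state part is the language with states projected, the
   output bit says that some word of [t] consists of accepting letters, and
   the a-derivative denotes the union of the product-rule derivatives of the
   words of [t].  Hence [lam] maps provably equal terms to related pairs, which
   is the preservation of the axioms.  The same description, read on finite
   languages, defines [kappa] with [kappa (tau t) = Hmap tau (lam t)]; as
   [tau] is onto, the distributive-law equations of [kappa] are transported
   from those of [lam]. *)

Lemma tmap_Plus {X Y : Type} (f : X -> Y) (t u : term X) :
  tmap f (Plus t u) = Plus (tmap f t) (tmap f u).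
Proof. reflexivity. Qed.

Lemma tmap_Times {X Y : Type} (f : X -> Y) (t u : term X) :
  tmap f (Times t u) = Times (tmap f t) (tmap f u).
Proof. reflexivity. Qed.

Lemma tjoin_Plus {X : Type} (t u : term (term X)) :
  tjoin (Plus t u) = Plus (tjoin t) (tjoin u).
Proof. reflexivity. Qed.

Lemma tjoin_Times {X : Type} (t u : term (term X)) :
  tjoin (Times t u) = Times (tjoin t) (tjoin u).
Proof. reflexivity. Qed.

Lemma tmap_tmap {X Y Z : Type} (f : X -> Y) (g : Y -> Z) (t : term X) :
  tmap g (tmap f t) = tmap (fun x => g (f x)) t.
Proof.
  induction t as [x| | |t IHt u IHu|t IHt u IHu]; cbn in *; unfold tmap in *;
    try rewrite IHt, IHu; reflexivity.
Qed.

Lemma tmap_ext {X Y : Type} (f g : X -> Y) (t : term X) :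
  (forall x, f x = g x) -> tmap f t = tmap g t.
Proof. intro Hfg; f_equal; extensionality x; apply Hfg. Qed.

Lemma tmap_tjoin {X Y : Type} (f : X -> Y) (s : term (term X)) :
  tmap f (tjoin s) = tjoin (tmap (tmap f) s).
Proof.
  induction s as [x| | |s IHs u IHu|s IHs u IHu]; cbn in *; unfold tmap, tjoin in *;
    try rewrite IHs, IHu; reflexivity.
Qed.

Lemma tmap_surjective {X Y : Type} (f : X -> Y) :
  (forall y, exists x, f x = y) -> forall t, exists s, tmap f s = t.
Proof.
  intros Hf t; induction t as [y| | |t [s <-] u [s' <-]|t [s <-] u [s' <-]].
  - destruct (Hf y) as [x <-]; exists (Var x); reflexivity.
  - exists Zero; reflexivity.
  - exists One; reflexivity.
  - exists (Plus s s'); reflexivity.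
  - exists (Times s s'); reflexivity.
Qed.

Lemma Hmap_comp {A X Y Z : Type} (f : X -> Y) (g : Y -> Z) (p : H A X) :
  Hmap g (Hmap f p) = Hmap (fun x => g (f x)) p.
Proof. reflexivity. Qed.

Lemma Hmap_ext {A X Y : Type} (f g : X -> Y) (p : H A X) :
  (forall x, f x = g x) -> Hmap f p = Hmap g p.
Proof. intro Hfg; f_equal; extensionality x; apply Hfg. Qed.

Lemma H_ext {A X : Type} (p q : H A X) :
  fst p = fst q -> fst (snd p) = fst (snd q) ->
  (forall a, snd (snd p) a = snd (snd q) a) -> p = q.
Proof.
  destruct p as [x [o f]], q as [y [o' g]]; simpl; intros -> -> Hfg.
  repeat f_equal; extensionality a; apply Hfg.
Qed.

#[export] Instance isr_eq_Equivalence (X : Type) : Equivalence (@isr_eq X).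
Proof. split; [exact (@isr_refl X) | exact (@isr_sym X) | exact (@isr_trans X)]. Qed.

#[export] Instance Plus_isr_eq_Proper (X : Type) :
  Proper (@isr_eq X ==> @isr_eq X ==> @isr_eq X) (@Plus X).
Proof. intros t t' Ht u u' Hu; exact (isr_plus Ht Hu). Qed.

#[export] Instance Times_isr_eq_Proper (X : Type) :
  Proper (@isr_eq X ==> @isr_eq X ==> @isr_eq X) (@Times X).
Proof. intros t t' Ht u u' Hu; exact (isr_times Ht Hu). Qed.

Definition subst3 {X : Type} (a b c : term X) (n : nat) : term X :=
  match n with 0 => a | 1 => b | _ => c end.

Lemma isr_addrA {X : Type} (a b c : term X) : isr_eq (Plus (Plus a b) c) (Plus a (Plus b c)).
Proof. exact (isr_ax ax_plus_assoc (subst3 a b c)). Qed.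
Lemma isr_addrC {X : Type} (a b : term X) : isr_eq (Plus a b) (Plus b a).
Proof. exact (isr_ax ax_plus_comm (subst3 a b a)). Qed.
Lemma isr_addr0 {X : Type} (a : term X) : isr_eq (Plus a Zero) a.
Proof. exact (isr_ax ax_plus_zero (subst3 a a a)). Qed.
Lemma isr_addrr {X : Type} (a : term X) : isr_eq (Plus a a) a.
Proof. exact (isr_ax ax_plus_idem (subst3 a a a)). Qed.
Lemma isr_mulrA {X : Type} (a b c : term X) : isr_eq (Times (Times a b) c) (Times a (Times b c)).
Proof. exact (isr_ax ax_times_assoc (subst3 a b c)). Qed.
Lemma isr_mul1r {X : Type} (a : term X) : isr_eq (Times One a) a.
Proof. exact (isr_ax ax_one_l (subst3 a a a)). Qed.
Lemma isr_mulr1 {X : Type} (a : term X) : isr_eq (Times a One) a.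
Proof. exact (isr_ax ax_one_r (subst3 a a a)). Qed.
Lemma isr_mulrDr {X : Type} (a b c : term X) :
  isr_eq (Times a (Plus b c)) (Plus (Times a b) (Times a c)).
Proof. exact (isr_ax ax_distr_l (subst3 a b c)). Qed.
Lemma isr_mulrDl {X : Type} (a b c : term X) :
  isr_eq (Times (Plus a b) c) (Plus (Times a c) (Times b c)).
Proof. exact (isr_ax ax_distr_r (subst3 a b c)). Qed.
Lemma isr_mul0r {X : Type} (a : term X) : isr_eq (Times Zero a) Zero.
Proof. exact (isr_ax ax_zero_l (subst3 a a a)). Qed.
Lemma isr_mulr0 {X : Type} (a : term X) : isr_eq (Times a Zero) Zero.
Proof. exact (isr_ax ax_zero_r (subst3 a a a)). Qed.

Lemma isr_add0r {X : Type} (a : term X) : isr_eq (Plus Zero a) a.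
Proof. rewrite isr_addrC; apply isr_addr0. Qed.

(** * Finite languages are the free idempotent semiring *)

Definition sem_equiv {X : Type} (t u : term X) : Prop :=
  forall w, In w (sem t) <-> In w (sem u).

Lemma in_sem_Zero {X : Type} (w : list X) : In w (sem Zero) <-> False.
Proof. reflexivity. Qed.

Lemma in_sem_One {X : Type} (w : list X) : In w (sem One) <-> w = [].
Proof. simpl; split; [intros [<- | []] | intros ->]; auto. Qed.

Lemma in_sem_Plus {X : Type} (t u : term X) w :
  In w (sem (Plus t u)) <-> In w (sem t) \/ In w (sem u).
Proof. apply in_app_iff. Qed.

Lemma in_sem_Times {X : Type} (t u : term X) w :
  In w (sem (Times t u)) <->
  exists w1 w2, In w1 (sem t) /\ In w2 (sem u) /\ w = w1 ++ w2.
Proof.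
  simpl; rewrite in_flat_map; split.
  - intros [w1 [H1 H2]]; apply in_map_iff in H2; destruct H2 as [w2 [<- H2]]; eauto.
  - intros [w1 [w2 [H1 [H2 ->]]]]; exists w1; split; auto; apply in_map_iff; eauto.
Qed.

Lemma isr_eq_sem_equiv {X : Type} (t u : term X) : isr_eq t u -> sem_equiv t u.
Proof.
  induction 1 as [| | | t t' u u' _ IHt _ IHu | t t' u u' _ IHt _ IHu | l r Hax s];
    unfold sem_equiv in *; intro w.
  - reflexivity.
  - symmetry; auto.
  - etransitivity; eauto.
  - rewrite !in_sem_Plus, IHt, IHu; reflexivity.
  - rewrite !in_sem_Times; setoid_rewrite IHt; setoid_rewrite IHu; reflexivity.
  - destruct Hax; cbn [tbind];
      repeat first [ setoid_rewrite in_sem_Plus | setoid_rewrite in_sem_Times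
                   | setoid_rewrite in_sem_Zero | setoid_rewrite in_sem_One ].
    all: firstorder subst; rewrite ?app_nil_r in *;
      eauto 10 using app_assoc, eq_sym, app_nil_r.
Qed.

Lemma in_sem_tmap {X Y : Type} (f : X -> Y) (t : term X) w :
  In w (sem (tmap f t)) <-> exists w0, In w0 (sem t) /\ w = map f w0.
Proof.
  revert w; induction t as [x| | |t IHt u IHu|t IHt u IHu]; intro w.
  - simpl; split; [intros [<- | []] | intros [w0 [[<- | []] ->]]]; eauto.
  - simpl; firstorder.
  - rewrite in_sem_One; split; [intros ->; exists []; simpl; auto|].
    intros [w0 [Hw0 ->]]; apply in_sem_One in Hw0; subst; reflexivity.
  - rewrite tmap_Plus, in_sem_Plus, IHt, IHu; setoid_rewrite in_sem_Plus; firstorder.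
  - rewrite tmap_Times; setoid_rewrite in_sem_Times; setoid_rewrite IHt; setoid_rewrite IHu.
    split.
    + intros [? [? [[w1 [H1 ->]] [[w2 [H2 ->]] ->]]]].
      exists (w1 ++ w2); rewrite map_app; eauto 7.
    + intros [w0 [[w1 [w2 [H1 [H2 ->]]]] ->]].
      rewrite map_app; exists (map f w1), (map f w2); eauto 7.
Qed.

Lemma sem_equiv_tmap {X Y : Type} (f : X -> Y) (t u : term X) :
  sem_equiv t u -> sem_equiv (tmap f t) (tmap f u).
Proof.
  intros Htu w; rewrite !in_sem_tmap.
  split; intros [w0 [Hw0 ->]]; exists w0; split; auto; apply Htu, Hw0.
Qed.

Fixpoint word_term {X : Type} (w : list X) : term X :=
  match w with [] => One | x :: w' => Times (Var x) (word_term w') end.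

Fixpoint sum_term {X : Type} (s : list (list X)) : term X :=
  match s with [] => Zero | w :: s' => Plus (word_term w) (sum_term s') end.

Lemma sem_sum_term {X : Type} (s : list (list X)) : sem (sum_term s) = s.
Proof.
  assert (Hw : forall w : list X, sem (word_term w) = [w]).
  { induction w as [|x w IH]; simpl; [|rewrite IH]; reflexivity. }
  induction s as [|w s IH]; simpl; [|rewrite Hw, IH]; reflexivity.
Qed.

Section LanguageModelComplete.
Variable X : Type.
Implicit Types (w : list X) (s : list (list X)) (t u : term X).

Lemma sum_term_app s s' :
  isr_eq (sum_term (s ++ s')) (Plus (sum_term s) (sum_term s')).
Proof.
  induction s as [|w s IH]; simpl.
  - symmetry; apply isr_add0r.
  - rewrite IH; symmetry; apply isr_addrA.
Qed.

Lemma word_term_app w w' :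
  isr_eq (word_term (w ++ w')) (Times (word_term w) (word_term w')).
Proof.
  induction w as [|x w IH]; simpl.
  - symmetry; apply isr_mul1r.
  - rewrite IH; symmetry; apply isr_mulrA.
Qed.

Lemma sum_term_map_app w s :
  isr_eq (sum_term (map (app w) s)) (Times (word_term w) (sum_term s)).
Proof.
  induction s as [|w' s IH]; simpl.
  - symmetry; apply isr_mulr0.
  - rewrite word_term_app, IH; symmetry; apply isr_mulrDr.
Qed.

Lemma sum_term_concat s s' :
  isr_eq (sum_term (flat_map (fun w => map (app w) s') s))
         (Times (sum_term s) (sum_term s')).
Proof.
  induction s as [|w s IH]; simpl.
  - symmetry; apply isr_mul0r.
  - rewrite sum_term_app, sum_term_map_app, IH; symmetry; apply isr_mulrDl.
Qed.

Lemma isr_eq_sum_term_sem t : isr_eq t (sum_term (sem t)).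
Proof.
  induction t as [x| | |t IHt u IHu|t IHt u IHu]; simpl.
  - rewrite isr_addr0, isr_mulr1; reflexivity.
  - reflexivity.
  - symmetry; apply isr_addr0.
  - rewrite sum_term_app, <- IHt, <- IHu; reflexivity.
  - rewrite sum_term_concat, <- IHt, <- IHu; reflexivity.
Qed.

Lemma sum_term_absorb w s :
  In w s -> isr_eq (Plus (word_term w) (sum_term s)) (sum_term s).
Proof.
  induction s as [|w' s IH]; simpl; [intros []|].
  intros [<- | Hw].
  - rewrite <- isr_addrA, isr_addrr; reflexivity.
  - rewrite <- isr_addrA, (isr_addrC (word_term w)), isr_addrA, (IH Hw).
    reflexivity.
Qed.

Lemma sum_term_incl s s' :
  incl s s' -> isr_eq (Plus (sum_term s) (sum_term s')) (sum_term s').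
Proof.
  induction s as [|w s IH]; simpl; intro Hs.
  - apply isr_add0r.
  - apply incl_cons_inv in Hs as [Hw Hs].
    rewrite isr_addrA, (IH Hs); apply sum_term_absorb, Hw.
Qed.

Lemma sem_equiv_isr_eq t u : sem_equiv t u -> isr_eq t u.
Proof.
  intro Htu.
  rewrite (isr_eq_sum_term_sem t), (isr_eq_sum_term_sem u).
  rewrite <- (sum_term_incl (sem u) (sem t)) at 1 by (intros w; apply Htu).
  rewrite isr_addrC; apply sum_term_incl; intros w; apply Htu.
Qed.

End LanguageModelComplete.

(** * The distributive law [lam] *)

Notation lam_out t := (fst (snd (lam t))).
Notation lam_der t a := (snd (snd (lam t)) a).

Section LambdaEquations.
Variables A X : Type.
Implicit Types t u : term (H A X).

Lemma lam_fst t : fst (lam t) = tmap fst t.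
Proof.
  induction t as [x| | |t IHt u IHu|t IHt u IHu]; simpl; try rewrite IHt, IHu;
    reflexivity.
Qed.

Lemma lam_out_Plus t u : lam_out (Plus t u) = lam_out t || lam_out u.
Proof. simpl; destruct (lam t) as [? [? ?]], (lam u) as [? [? ?]]; reflexivity. Qed.

Lemma lam_der_Plus t u a : lam_der (Plus t u) a = Plus (lam_der t a) (lam_der u a).
Proof. simpl; destruct (lam t) as [? [? ?]], (lam u) as [? [? ?]]; reflexivity. Qed.

Lemma lam_out_Times t u : lam_out (Times t u) = lam_out t && lam_out u.
Proof. simpl; destruct (lam t) as [? [? ?]], (lam u) as [? [? ?]]; reflexivity. Qed.

Lemma lam_der_Times t u a :
  lam_der (Times t u) a =
  if lam_out t then Plus (Times (lam_der t a) (fst (lam u))) (lam_der u a)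
  else Times (lam_der t a) (fst (lam u)).
Proof.
  simpl; destruct (lam t) as [? [o ?]], (lam u) as [? [? ?]]; destruct o; reflexivity.
Qed.

End LambdaEquations.

Definition word_accepts {A X : Type} (w : list (H A X)) : bool :=
  forallb (fun h => fst (snd h)) w.

(* Product rule for Brzozowski derivatives: the a-derivative of h_1 ... h_n is
   the sum, over those i with h_1, ..., h_(i-1) accepting, of the words
   (h_i)_a h_(i+1) ... h_n, where h_j stands for its state [fst h_j]. *)
Fixpoint word_der {A X : Type} (a : A) (w : list (H A X)) : list (list X) :=
  match w with
  | [] => []
  | h :: w' =>
      (snd (snd h) a :: map fst w') :: (if fst (snd h) then word_der a w' else [])
  end.

Lemma word_accepts_app {A X : Type} (w1 w2 : list (H A X)) :
  word_accepts (w1 ++ w2) = word_accepts w1 && word_accepts w2.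
Proof. apply forallb_app. Qed.

Lemma in_word_der_app {A X : Type} (a : A) (w1 w2 : list (H A X)) v :
  In v (word_der a (w1 ++ w2)) <->
  (exists v1, In v1 (word_der a w1) /\ v = v1 ++ map fst w2) \/
  (word_accepts w1 = true /\ In v (word_der a w2)).
Proof.
  revert v; induction w1 as [|[x [o f]] w1 IH]; intro v; simpl.
  - firstorder.
  - rewrite map_app; destruct o; simpl; [rewrite IH|];
      firstorder (subst; eauto; discriminate).
Qed.

Section LambdaSemantics.
Variables A X : Type.
Implicit Types t u : term (H A X).

Lemma lam_out_spec t :
  lam_out t = true <-> exists w, In w (sem t) /\ word_accepts w = true.
Proof.
  induction t as [[x [o f]]| | |t IHt u IHu|t IHt u IHu].
  - simpl; split.
    + intro Ho; exists [(x, (o, f))]; simpl; rewrite Ho; auto.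
    + intros [w [[<- | []] Hw]]; simpl in Hw; rewrite andb_true_r in Hw; exact Hw.
  - simpl; split; [discriminate | intros [? [[] _]]].
  - simpl; split; [exists []; auto | reflexivity].
  - rewrite lam_out_Plus, orb_true_iff, IHt, IHu; setoid_rewrite in_sem_Plus; firstorder.
  - rewrite lam_out_Times, andb_true_iff, IHt, IHu; setoid_rewrite in_sem_Times.
    split.
    + intros [[w1 [H1 A1]] [w2 [H2 A2]]]; exists (w1 ++ w2).
      rewrite word_accepts_app, A1, A2; eauto 7.
    + intros [w [[w1 [w2 [H1 [H2 ->]]]] Hw]].
      rewrite word_accepts_app, andb_true_iff in Hw; firstorder.
Qed.

Lemma lam_der_spec t a v :
  In v (sem (lam_der t a)) <-> exists w, In w (sem t) /\ In v (word_der a w).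
Proof.
  revert v; induction t as [[x [o f]]| | |t IHt u IHu|t IHt u IHu]; intro v.
  - simpl; split.
    + intros [<- | []]; exists [(x, (o, f))]; simpl; auto.
    + intros [w [[<- | []] Hv]]; destruct o; simpl in Hv; tauto.
  - simpl; split; [intros [] | intros [? [[] _]]].
  - simpl; split; [intros [] | intros [w [[<- | []] []]]].
  - rewrite lam_der_Plus, in_sem_Plus, IHt, IHu; setoid_rewrite in_sem_Plus; firstorder.
  - assert (Hprod : In v (sem (lam_der (Times t u) a)) <->
      (exists v1 w2, In v1 (sem (lam_der t a)) /\ In w2 (sem u) /\ v = v1 ++ map fst w2)
      \/ (lam_out t = true /\ In v (sem (lam_der u a)))).
    { rewrite lam_der_Times, lam_fst.
      destruct (lam_out t); [rewrite in_sem_Plus|]; rewrite in_sem_Times;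
        setoid_rewrite in_sem_tmap; firstorder (subst; eauto; discriminate). }
    rewrite Hprod, lam_out_spec, IHu; setoid_rewrite IHt; setoid_rewrite in_sem_Times.
    split.
    + intros [[v1 [w2 [[w1 [H1 Hv1]] [H2 ->]]]] | [[w1 [H1 A1]] [w2 [H2 Hv]]]];
        exists (w1 ++ w2); rewrite in_word_der_app; eauto 10.
    + intros [w [[w1 [w2 [H1 [H2 ->]]]] Hv]].
      apply in_word_der_app in Hv as [[v1 [Hv1 ->]] | [A1 Hv]]; eauto 10.
Qed.

End LambdaSemantics.

Lemma lam_respects_isr_eq {A X : Type} (t u : term (H A X)) :
  isr_eq t u -> relH (@isr_eq X) (lam t) (lam u).
Proof.
  intro Htu; apply isr_eq_sem_equiv in Htu.
  split; [|split].
  - rewrite !lam_fst; apply sem_equiv_isr_eq, sem_equiv_tmap, Htu.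
  - apply eq_true_iff_eq; rewrite !lam_out_spec.
    split; intros [w [Hw Aw]]; exists w; split; auto; apply Htu, Hw.
  - intro a; apply sem_equiv_isr_eq; intro v; rewrite !lam_der_spec.
    split; intros [w [Hw Hv]]; exists w; split; auto; apply Htu, Hw.
Qed.

Lemma lam_preserves_isr_axioms (A : Type) (l r : term nat) :
  isr_axiom l r -> preserves_axiom A l r.
Proof. intros Hax X v; apply lam_respects_isr_eq, (isr_ax Hax). Qed.

Section LambdaDistributiveLaw.
Variable A : Type.

Lemma lam_out_tmap {X Y : Type} (f : X -> Y) (t : term (H A X)) :
  lam_out (tmap (Hmap f) t) = lam_out t.
Proof.
  induction t as [x| | |t IHt u IHu|t IHt u IHu]; try reflexivity.
  - rewrite tmap_Plus, !lam_out_Plus, IHt, IHu; reflexivity.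
  - rewrite tmap_Times, !lam_out_Times, IHt, IHu; reflexivity.
Qed.

Lemma lam_der_tmap {X Y : Type} (f : X -> Y) (t : term (H A X)) a :
  lam_der (tmap (Hmap f) t) a = tmap f (lam_der t a).
Proof.
  induction t as [x| | |t IHt u IHu|t IHt u IHu]; try reflexivity.
  - rewrite tmap_Plus, !lam_der_Plus, IHt, IHu; reflexivity.
  - rewrite tmap_Times, !lam_der_Times, lam_out_tmap, IHt, IHu, !lam_fst.
    destruct (lam_out t); rewrite ?tmap_Plus, tmap_Times, !tmap_tmap; reflexivity.
Qed.

Lemma lam_tmap {X Y : Type} (f : X -> Y) (t : term (H A X)) :
  lam (tmap (Hmap f) t) = Hmap (tmap f) (lam t).
Proof.
  apply H_ext; simpl.
  - rewrite !lam_fst, !tmap_tmap; reflexivity.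
  - apply lam_out_tmap.
  - apply lam_der_tmap.
Qed.

Lemma lam_out_tjoin {X : Type} (s : term (term (H A X))) :
  lam_out (tjoin s) = lam_out (tmap (@lam A X) s).
Proof.
  induction s as [t| | |s IHs u IHu|s IHs u IHu]; try reflexivity.
  - rewrite tjoin_Plus, tmap_Plus, !lam_out_Plus, IHs, IHu; reflexivity.
  - rewrite tjoin_Times, tmap_Times, !lam_out_Times, IHs, IHu; reflexivity.
Qed.

Lemma lam_fst_tjoin {X : Type} (s : term (term (H A X))) :
  fst (lam (tjoin s)) = tjoin (fst (lam (tmap (@lam A X) s))).
Proof.
  rewrite !lam_fst, tmap_tjoin, tmap_tmap; f_equal.
  apply tmap_ext; intro t; symmetry; apply lam_fst.
Qed.

Lemma lam_der_tjoin {X : Type} (s : term (term (H A X))) a :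
  lam_der (tjoin s) a = tjoin (lam_der (tmap (@lam A X) s) a).
Proof.
  induction s as [t| | |s IHs u IHu|s IHs u IHu]; try reflexivity.
  - rewrite tjoin_Plus, tmap_Plus, !lam_der_Plus, IHs, IHu; reflexivity.
  - rewrite tjoin_Times, tmap_Times, !lam_der_Times, lam_out_tjoin, IHs, IHu.
    rewrite lam_fst_tjoin.
    destruct (lam_out (tmap (@lam A X) s)); reflexivity.
Qed.

Lemma lam_tjoin {X : Type} (s : term (term (H A X))) :
  lam (tjoin s) = Hmap (@tjoin X) (lam (tmap (@lam A X) s)).
Proof.
  apply H_ext; simpl; [apply lam_fst_tjoin | apply lam_out_tjoin | apply lam_der_tjoin].
Qed.

End LambdaDistributiveLaw.

(** * Transport to the monad of finite languages *)

Lemma PW_ext {X : Type} (L1 L2 : PW X) :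
  (forall w, proj1_sig L1 w <-> proj1_sig L2 w) -> L1 = L2.
Proof.
  destruct L1 as [l1 p1], L2 as [l2 p2]; simpl; intro Hl.
  assert (l1 = l2) as <- by (extensionality w; apply propositional_extensionality, Hl).
  f_equal; apply proof_irrelevance.
Qed.

Lemma tau_tmap {X Y : Type} (f : X -> Y) (t : term X) : tau (tmap f t) = PWmap f (tau t).
Proof. apply PW_ext; intro w; apply in_sem_tmap. Qed.

Lemma tau_Var {X : Type} (x : X) : tau (Var x) = PWunit x.
Proof. apply PW_ext; intro w; simpl; split; [intros [<- | []] | intros ->]; auto. Qed.

Lemma concat_in_app {X : Type} (Ls1 Ls2 : list (PW X)) w :
  concat_in (Ls1 ++ Ls2) w <->
  exists w1 w2, concat_in Ls1 w1 /\ concat_in Ls2 w2 /\ w = w1 ++ w2.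
Proof.
  revert w; induction Ls1 as [|L Ls1 IH]; intro w; simpl.
  - split; [intro; exists [], w; auto | intros [w1 [w2 [-> [? ->]]]]; auto].
  - setoid_rewrite IH; split.
    + intros [u1 [u2 [H1 [[v1 [v2 [H2 [H3 ->]]]] ->]]]].
      exists (u1 ++ v1), v2; rewrite <- app_assoc; eauto 7.
    + intros [w1 [w2 [[u1 [u2 [H1 [H2 ->]]]] [H3 ->]]]].
      exists u1, (u2 ++ w2); rewrite app_assoc; eauto 7.
Qed.

Lemma in_sem_tjoin {X : Type} (t : term (term X)) w :
  In w (sem (tjoin t)) <->
  exists ws, In ws (sem t) /\ concat_in (map (@tau X) ws) w.
Proof.
  revert w; induction t as [x| | |t IHt u IHu|t IHt u IHu]; intro w.
  - change (tjoin (Var x)) with x; simpl; split.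
    + intro Hw; exists [x]; split; auto.
      exists w, []; rewrite app_nil_r; repeat split; exact Hw.
    + intros [ws [[<- | []] [w1 [w2 [H1 [-> ->]]]]]]; rewrite app_nil_r; exact H1.
  - simpl; split; [intros [] | intros [? [[] _]]].
  - simpl; split.
    + intros [<- | []]; exists []; simpl; auto.
    + intros [ws [[<- | []] Hc]]; simpl in Hc; auto.
  - rewrite tjoin_Plus, in_sem_Plus, IHt, IHu; setoid_rewrite in_sem_Plus; firstorder.
  - rewrite tjoin_Times, in_sem_Times; setoid_rewrite in_sem_Times; setoid_rewrite IHt;
      setoid_rewrite IHu; split.
    + intros [w1 [w2 [[ws1 [H1 C1]] [[ws2 [H2 C2]] ->]]]].
      exists (ws1 ++ ws2); rewrite map_app, concat_in_app; eauto 10.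
    + intros [ws [[ws1 [ws2 [H1 [H2 ->]]]] Hc]].
      rewrite map_app, concat_in_app in Hc; destruct Hc as [w1 [w2 [C1 [C2 ->]]]].
      eauto 10.
Qed.

Lemma tau_tjoin {X : Type} (t : term (term X)) :
  tau (tjoin t) = PWmu (PWmap (@tau X) (tau t)).
Proof.
  apply PW_ext; intro w; simpl; rewrite in_sem_tjoin; split.
  - intros [ws [Hws Hc]]; exists (map (@tau X) ws); eauto.
  - intros [Ls [[ws [Hws ->]] Hc]]; eauto.
Qed.

Lemma tau_is_monad_morphism : tau_monad_morphism.
Proof. split; [|split]; intros; [apply tau_tmap | apply tau_Var | apply tau_tjoin]. Qed.

Lemma tau_surjective {X : Type} (L : PW X) : exists t, tau t = L.
Proof.
  destruct L as [L [s Hs]]; exists (sum_term s); apply PW_ext; intro w; simpl.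
  rewrite sem_sum_term, Hs; reflexivity.
Qed.

Section LanguageDistributiveLaw.
Variable A : Type.

Definition lang_accepts {X : Type} (L : PW (H A X)) : bool :=
  if excluded_middle_informative (exists w, proj1_sig L w /\ word_accepts w = true)
  then true else false.

Lemma lang_accepts_spec {X : Type} (L : PW (H A X)) :
  lang_accepts L = true <-> exists w, proj1_sig L w /\ word_accepts w = true.
Proof.
  unfold lang_accepts; destruct excluded_middle_informative; split; auto; discriminate.
Qed.

Lemma lang_der_fin {X : Type} (a : A) (L : PW (H A X)) :
  finite_lang (fun v => exists w, proj1_sig L w /\ In v (word_der a w)).
Proof.
  destruct L as [L [s Hs]]; exists (flat_map (word_der a) s); intro v; simpl.
  rewrite in_flat_map; split; intros [w [H1 H2]]; exists w; split; auto; apply Hs; auto.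
Qed.

Definition lang_der {X : Type} (a : A) (L : PW (H A X)) : PW X :=
  exist _ _ (lang_der_fin a L).

Definition kappa (X : Type) (L : PW (H A X)) : H A (PW X) :=
  (PWmap fst L, (lang_accepts L, fun a => lang_der a L)).

Lemma kappa_tau : distr_law_morphism kappa.
Proof.
  intros X t; apply H_ext; simpl.
  - rewrite lam_fst, tau_tmap; reflexivity.
  - apply eq_true_iff_eq; rewrite lang_accepts_spec, lam_out_spec; reflexivity.
  - intro a; apply PW_ext; intro v; simpl; rewrite lam_der_spec; reflexivity.
Qed.

Lemma kappa_natural {X Y : Type} (f : X -> Y) (L : PW (H A X)) :
  kappa Y (PWmap (Hmap f) L) = Hmap (PWmap f) (kappa X L).
Proof.
  destruct (tau_surjective L) as [s <-].
  rewrite <- tau_tmap, !kappa_tau, lam_tmap, !Hmap_comp.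
  apply Hmap_ext; intro t; apply tau_tmap.
Qed.

Lemma kappa_unit {X : Type} (h : H A X) : kappa X (PWunit h) = Hmap (@PWunit X) h.
Proof.
  rewrite <- tau_Var, kappa_tau; change (lam (Var h)) with (Hmap (@Var X) h).
  rewrite Hmap_comp; apply Hmap_ext; intro x; apply tau_Var.
Qed.

Lemma kappa_mu {X : Type} (T : PW (PW (H A X))) :
  kappa X (PWmu T) = Hmap (@PWmu X) (kappa (PW X) (PWmap (kappa X) T)).
Proof.
  destruct (tau_surjective T) as [s0 <-].
  destruct (tmap_surjective (@tau (H A X)) tau_surjective s0) as [s <-].
  rewrite tau_tmap, <- tau_tjoin, kappa_tau, lam_tjoin.
  rewrite <- !tau_tmap, tmap_tmap, (tmap_ext _ _ s (kappa_tau X)).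
  rewrite <- (tmap_tmap (@lam A X) (Hmap (@tau X))), tau_tmap, kappa_natural, kappa_tau.
  rewrite !Hmap_comp; apply Hmap_ext; intro t; apply tau_tjoin.
Qed.

Lemma kappa_is_distr_law : is_distr_law_PW kappa.
Proof.
  split; [|split; [|split]]; intros.
  - apply kappa_natural.
  - apply kappa_unit.
  - apply kappa_mu.
  - reflexivity.
Qed.

End LanguageDistributiveLaw.

Theorem mainTheorem11 (A : Type) :
  (forall l r : term nat, isr_axiom l r -> preserves_axiom A l r) /\
  exists kappa : forall X : Type, PW (H A X) -> H A (PW X),
    is_distr_law_PW kappa /\ tau_monad_morphism /\ distr_law_morphism kappa.
Proof.
  split.
  - apply lam_preserves_isr_axioms.
  - exists (kappa A); split; [apply kappa_is_distr_law|].
    split; [apply tau_is_monad_morphism | apply kappa_tau].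
Qed.
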